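(* Let $n$ be a positive integer and let $f\colon\{0,1\}^n\to\mathbb{R}$ be any function with a unique global minimum. Then the expected optimization time of the (1+1)~EA minimizing $f$ is at least the expected optimization time of the (1+1)~EA minimizing $\textsc{OneMax}(x)=\sum_{i=1}^n x_i$ on $\{0,1\}^n$, i.e. $\mathrm{E}[T_f]\ge\mathrm{E}[T_{\textsc{OneMax}}]$.
   Context: The (1+1)~EA minimizing $f\colon\{0,1\}^n\to\mathbb{R}$: choose $x^{(0)}\in\{0,1\}^n$ uniformly at random; for $t=0,1,2,\dots$, sample $y^{(t)}$ by flipping each bit of $x^{(t)}$ independently with probability $1/n$; set $x^{(t+1)}:=y^{(t)}$ if $f(y^{(t)})\le f(x^{(t)})$ and $x^{(t+1)}:=x^{(t)}$ otherwise. The optimization time is the random variable $T_f=\min\{t\in\mathbb{N}: f(x^{(t)})=\min_{z\in\{0,1\}^n}f(z)\}$. *)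

(* Stdlib reals.  Bit strings of {0,1}^n are represented as
   lists of booleans of length n; all finite sums range over the explicit
   enumeration [all_bits n] of {0,1}^n. *)
From Stdlib Require Import Reals List.
Open Scope R_scope.

Fixpoint all_bits (n : nat) : list (list bool) :=
  match n with
  | O => nil :: nil
  | S m => map (cons false) (all_bits m) ++ map (cons true) (all_bits m)
  end.

Definition sumL {A : Type} (l : list A) (g : A -> R) : R :=
  fold_right (fun a acc => g a + acc) 0 l.

Fixpoint hamming (x y : list bool) : nat :=
  match x, y with
  | a :: x', b :: y' => (if Bool.eqb a b then 0 else 1) + hamming x' y'
  | _, _ => 0
  end%nat.

Definition mut (n : nat) (x y : list bool) : R :=
  (/ INR n) ^ (hamming x y) * (1 - / INR n) ^ (n - hamming x y).

Definition bits_eq_dec := list_eq_dec Bool.bool_dec.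

Definition ind_eq (a b : list bool) : R := if bits_eq_dec a b then 1 else 0.

(* transition kernel of the (1+1) EA minimizing f: probability that
   x^(t+1) = z given x^(t) = x *)
Definition ea_kernel (f : list bool -> R) (n : nat) (x z : list bool) : R :=
  sumL (all_bits n)
    (fun y => mut n x y *
       (if Rle_dec (f y) (f x) then ind_eq z y else ind_eq z x)).

Definition fmin (f : list bool -> R) (n : nat) : R :=
  fold_right (fun y m => Rmin (f y) m) (f (repeat false n)) (all_bits n).

Definition not_opt (f : list bool -> R) (n : nat) (x : list bool) : R :=
  if Req_EM_T (f x) (fmin f n) then 0 else 1.

(* surv f n t x = Pr[ x^(0), ..., x^(t) all non-optimal | x^(0) = x ] *)
Fixpoint surv (f : list bool -> R) (n : nat) (t : nat) (x : list bool) : R :=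
  match t with
  | O => not_opt f n x
  | S t' => not_opt f n x * sumL (all_bits n) (fun z => ea_kernel f n x z * surv f n t' z)
  end.

(* Pr[T_f > t], with x^(0) uniform on {0,1}^n *)
Definition tail_prob (f : list bool -> R) (n : nat) (t : nat) : R :=
  sumL (all_bits n) (fun x => / 2 ^ n * surv f n t x).

(* E[T_f] = sum_{t >= 0} Pr[T_f > t] = e *)
Definition expected_time (f : list bool -> R) (n : nat) (e : R) : Prop :=
  infinite_sum (tail_prob f n) e.

Definition OneMax (x : list bool) : R := INR (count_occ Bool.bool_dec x true).

Definition unique_global_min (f : list bool -> R) (n : nat) : Prop :=
  exists x, length x = n /\
    forall y, length y = n -> y <> x -> f x < f y.

From Stdlib Require Import Reals List Lia Lra FunctionalExtensionality.
Open Scope R_scope.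

(* Let [xs] be the unique minimum of [f].  Along the run on [f], the Hamming
   distance to [xs] of the next string is at least the minimum of the distances
   of parent and offspring, while on OneMax the next distance to the all-zero
   string is exactly that minimum.  For mutation rate [1/n <= 1/2] the distance
   of the offspring is stochastically increasing in the distance of the parent,
   so the OneMax survival probability [onemax_surv n t c] is nondecreasing in
   [c], and induction on [t] gives [Pr_f[T > t | x] >= onemax_surv n t (H(x, xs))].
   Since [H(x, xs)] and [H(x, 0)] have the same distribution for uniform [x],
   [Pr[T_f > t] >= Pr[T_OneMax > t]] for every [t]; summing over [t] yields the
   claim, the series converging because from any non-optimal string the optimum is reached
   in one step with probability at least [n^-n (1 - 1/n)^(n-1)]. *)

Section ListSums.
Context {A : Type}.

Lemma sumL_app (l1 l2 : list A) g : sumL (l1 ++ l2) g = sumL l1 g + sumL l2 g.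
Proof. induction l1; simpl; [ring | rewrite IHl1; ring]. Qed.

Lemma sumL_map {B : Type} (h : B -> A) l g : sumL (map h l) g = sumL l (fun b => g (h b)).
Proof. induction l; simpl; [ring | rewrite IHl; ring]. Qed.

Lemma sumL_ext (l : list A) g1 g2 :
  (forall a, In a l -> g1 a = g2 a) -> sumL l g1 = sumL l g2.
Proof. induction l; simpl; intros H; [ring |]. rewrite H, IHl by auto. ring. Qed.

Lemma sumL_le (l : list A) g1 g2 :
  (forall a, In a l -> g1 a <= g2 a) -> sumL l g1 <= sumL l g2.
Proof. induction l; simpl; intros H; [lra |]. apply Rplus_le_compat; auto. Qed.

Lemma sumL_plus (l : list A) g1 g2 :
  sumL l (fun a => g1 a + g2 a) = sumL l g1 + sumL l g2.
Proof. induction l; simpl; [ring | rewrite IHl; ring]. Qed.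

Lemma sumL_minus (l : list A) g1 g2 :
  sumL l (fun a => g1 a - g2 a) = sumL l g1 - sumL l g2.
Proof. induction l; simpl; [ring | rewrite IHl; ring]. Qed.

Lemma sumL_scal_l (l : list A) c g : sumL l (fun a => c * g a) = c * sumL l g.
Proof. induction l; simpl; [ring | rewrite IHl; ring]. Qed.

Lemma sumL_0 (l : list A) g : (forall a, g a = 0) -> sumL l g = 0.
Proof. induction l; simpl; intros H; [ring | rewrite H, IHl; auto; ring]. Qed.

Lemma sumL_nonneg (l : list A) g : (forall a, In a l -> 0 <= g a) -> 0 <= sumL l g.
Proof. intros H. rewrite <- (sumL_0 l (fun _ => 0)) by auto. now apply sumL_le. Qed.

End ListSums.

Lemma sumL_comm {A B : Type} (l1 : list A) (l2 : list B) g :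
  sumL l1 (fun a => sumL l2 (g a)) = sumL l2 (fun b => sumL l1 (fun a => g a b)).
Proof.
  induction l1; simpl.
  - symmetry. now apply sumL_0.
  - rewrite IHl1, <- sumL_plus. reflexivity.
Qed.

Lemma in_all_bits m y : In y (all_bits m) <-> length y = m.
Proof.
  revert y; induction m as [|m IH]; simpl; intros y.
  - split; [intros [<- | []]; reflexivity | destruct y; [auto | discriminate]].
  - rewrite in_app_iff, !in_map_iff. split.
    + intros [[y' [<- H]] | [y' [<- H]]]; simpl; f_equal; now apply IH.
    + destruct y as [|b y]; simpl; [discriminate |]. intros [= H].
      destruct b; [right | left]; exists y; split; auto; now apply IH.
Qed.

Lemma sumL_all_bits_const m c : sumL (all_bits m) (fun _ => c) = c * 2 ^ m.
Proof. induction m; simpl; [ring |]. rewrite sumL_app, !sumL_map, IHm. ring. Qed.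

Lemma ind_eq_cons b d w v :
  ind_eq (b :: w) (d :: v) = if Bool.eqb b d then ind_eq w v else 0.
Proof.
  unfold ind_eq.
  destruct (bits_eq_dec (b :: w) (d :: v)) as [E | E], (bits_eq_dec w v) as [E' | E'];
    destruct b, d; simpl; try congruence.
Qed.

Lemma sumL_ind_eq m v h : length v = m ->
  sumL (all_bits m) (fun w => ind_eq w v * h w) = h v.
Proof.
  revert v h; induction m as [|m IH]; intros [|b v] h Hv; try discriminate.
  - simpl. unfold ind_eq. destruct (bits_eq_dec nil nil); [ring | congruence].
  - injection Hv as Hv. simpl all_bits. rewrite sumL_app, !sumL_map.
    assert (Hcons : forall d, sumL (all_bits m) (fun w => ind_eq (d :: w) (b :: v) * h (d :: w))
                      = if Bool.eqb d b then h (b :: v) else 0).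
    { intros d. destruct (Bool.eqb d b) eqn:Ed.
      - apply Bool.eqb_prop in Ed as ->.
        rewrite <- (IH v (fun w => h (b :: w))) by exact Hv.
        apply sumL_ext. intros w _. now rewrite ind_eq_cons, Bool.eqb_reflx.
      - apply sumL_0. intros w. rewrite ind_eq_cons, Ed. ring. }
    rewrite !Hcons. destruct b; simpl; ring.
Qed.

Lemma hamming_le_length x a : (hamming x a <= length x)%nat.
Proof.
  revert a; induction x as [|c x IH]; intros [|b a]; simpl; try lia.
  specialize (IH a). destruct (Bool.eqb c b); lia.
Qed.

Lemma hamming_diag x : hamming x x = 0%nat.
Proof. induction x as [|[|] x IH]; simpl; auto. Qed.

Lemma hamming_eq_0 x a : length x = length a -> hamming x a = 0%nat -> x = a.
Proof.
  revert a; induction x as [|c x IH]; intros [|b a]; simpl; try discriminate; auto.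
  intros [= Hl] H. destruct c, b; simpl in H; try discriminate; f_equal; auto.
Qed.

Lemma count_true_hamming z :
  count_occ Bool.bool_dec z true = hamming z (repeat false (length z)).
Proof.
  induction z as [|[|] z IH]; simpl; auto.
Qed.

Lemma sumL_hamming_to_zeros m a phi : length a = m ->
  sumL (all_bits m) (fun x => phi (hamming x a))
  = sumL (all_bits m) (fun x => phi (hamming x (repeat false m))).
Proof.
  revert a phi; induction m as [|m IH]; intros [|b a] phi Ha; try discriminate.
  - reflexivity.
  - injection Ha as Ha. simpl. rewrite !sumL_app, !sumL_map. simpl.
    pose proof (IH a phi Ha) as H0. pose proof (IH a (fun k => phi (S k)) Ha) as H1.
    simpl in H0, H1. destruct b; simpl; rewrite H0, H1; ring.
Qed.

Section BitFlips.
Variable p : R.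

Definition flip_prob (m : nat) (x y : list bool) : R :=
  p ^ hamming x y * (1 - p) ^ (m - hamming x y).

(* Accounts for one more bit, which disagrees with the target iff [differs];
   the bit is flipped with probability [p]. *)
Definition flip_step (differs : bool) (psi : nat -> R) (e : nat) : R :=
  if differs then p * psi e + (1 - p) * psi (S e)
  else (1 - p) * psi e + p * psi (S e).

(* The expectation of [psi (hamming y a)] when [y] arises from [x] by flipping
   each of its [m] bits independently with probability [p] and [hamming x a = c]. *)
Definition dist_expect (m c : nat) (psi : nat -> R) : R :=
  Nat.iter (m - c) (flip_step false) (Nat.iter c (flip_step true) psi) 0%nat.

Lemma sumL_flip_prob_cons m b a c x psi : length x = m ->
  sumL (all_bits (S m)) (fun y => flip_prob (S m) (c :: x) y * psi (hamming y (b :: a)))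
  = sumL (all_bits m)
      (fun y => flip_prob m x y * flip_step (negb (Bool.eqb c b)) psi (hamming y a)).
Proof.
  intros Hx. simpl all_bits. rewrite sumL_app, !sumL_map, <- sumL_plus.
  apply sumL_ext. intros y Hy. apply in_all_bits in Hy.
  pose proof (hamming_le_length x y) as Hh. set (h := hamming x y) in *.
  assert (E : (S m - h = S (m - h))%nat) by lia.
  unfold flip_prob, flip_step; destruct b, c; cbn [hamming Bool.eqb Nat.add negb];
    fold h; rewrite ?E; cbn [Nat.sub pow]; ring.
Qed.

Lemma flip_step_comm k1 k2 psi :
  flip_step k1 (flip_step k2 psi) = flip_step k2 (flip_step k1 psi).
Proof. apply functional_extensionality; intros e. destruct k1, k2; unfold flip_step; ring. Qed.

Lemma flip_step_iter_comm j k k' psi :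
  flip_step k (Nat.iter j (flip_step k') psi) = Nat.iter j (flip_step k') (flip_step k psi).
Proof. induction j; simpl; auto. now rewrite flip_step_comm, IHj. Qed.

Lemma sumL_flip_prob_hamming m x a psi : length x = m -> length a = m ->
  sumL (all_bits m) (fun y => flip_prob m x y * psi (hamming y a))
  = dist_expect m (hamming x a) psi.
Proof.
  intros <-; revert a psi; induction x as [|c x IH]; intros [|b a] psi Hl; try discriminate.
  - unfold dist_expect, flip_prob. simpl. ring.
  - injection Hl as Hl. simpl length.
    rewrite sumL_flip_prob_cons, IH by auto.
    pose proof (hamming_le_length x a).
    assert (E : (S (length x) - hamming x a = S (length x - hamming x a))%nat) by lia.
    unfold dist_expect. destruct c, b; cbn [hamming Bool.eqb negb Nat.add]; rewrite ?E;
      rewrite ?Nat.iter_succ, <- ?flip_step_iter_comm; reflexivity.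
Qed.

Lemma dist_expect_const_1 m c : dist_expect m c (fun _ => 1) = 1.
Proof.
  assert (H1 : forall k, flip_step k (fun _ => 1) = (fun _ => 1)).
  { intros k. apply functional_extensionality; intros. unfold flip_step; destruct k; ring. }
  assert (Hiter : forall j k, Nat.iter j (flip_step k) (fun _ => 1) = (fun _ => 1)).
  { intros j k. induction j; simpl; [reflexivity | now rewrite IHj]. }
  unfold dist_expect. now rewrite !Hiter.
Qed.

Hypothesis p_prob : 0 <= p <= 1.

Lemma flip_step_growing k psi : Un_growing psi -> Un_growing (flip_step k psi).
Proof. intros H e. pose proof (H e); pose proof (H (S e)). unfold flip_step; destruct k; nra. Qed.

Lemma flip_step_nonneg k psi : (forall e, 0 <= psi e) -> forall e, 0 <= flip_step k psi e.
Proof. intros H e. pose proof (H e); pose proof (H (S e)). unfold flip_step; destruct k; nra. Qed.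

Lemma flip_step_le k psi psi' : (forall e, psi e <= psi' e) ->
  forall e, flip_step k psi e <= flip_step k psi' e.
Proof. intros H e. pose proof (H e); pose proof (H (S e)). unfold flip_step; destruct k; nra. Qed.

Lemma iter_flip_step_le j k psi psi' : (forall e, psi e <= psi' e) ->
  forall e, Nat.iter j (flip_step k) psi e <= Nat.iter j (flip_step k) psi' e.
Proof. intros H; induction j; simpl; auto. now apply flip_step_le. Qed.

Lemma dist_expect_le m c psi psi' : (forall e, psi e <= psi' e) ->
  dist_expect m c psi <= dist_expect m c psi'.
Proof. intros H. unfold dist_expect. now apply iter_flip_step_le, iter_flip_step_le. Qed.

Lemma dist_expect_nonneg m c psi : (forall e, 0 <= psi e) -> 0 <= dist_expect m c psi.
Proof.
  intros H. unfold dist_expect.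
  apply (Nat.iter_invariant _ _ _ (fun phi => forall e, 0 <= phi e));
    [intros; now apply flip_step_nonneg |].
  apply (Nat.iter_invariant _ _ _ (fun phi => forall e, 0 <= phi e)); auto.
  intros; now apply flip_step_nonneg.
Qed.

Lemma flip_step_agree_le_differ psi : p <= / 2 -> Un_growing psi ->
  forall e, flip_step false psi e <= flip_step true psi e.
Proof. intros Hp H e. pose proof (H e). unfold flip_step. nra. Qed.

Lemma dist_expect_le_succ m c psi : p <= / 2 -> Un_growing psi -> (S c <= m)%nat ->
  dist_expect m c psi <= dist_expect m (S c) psi.
Proof.
  intros Hp Hpsi Hc. unfold dist_expect.
  replace (m - c)%nat with (S (m - S c)) by lia.
  rewrite Nat.iter_succ, flip_step_iter_comm, Nat.iter_succ.
  apply iter_flip_step_le, flip_step_agree_le_differ; auto.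
  apply Nat.iter_invariant; auto. intros; now apply flip_step_growing.
Qed.

Lemma dist_expect_mono m c c' psi : p <= / 2 -> Un_growing psi -> (c <= c' <= m)%nat ->
  dist_expect m c psi <= dist_expect m c' psi.
Proof.
  intros Hp Hpsi [Hc Hc']. induction Hc; [lra |].
  eapply Rle_trans; [apply IHHc; lia |]. now apply dist_expect_le_succ.
Qed.

End BitFlips.

Lemma inv_INR_prob n : (0 < n)%nat -> 0 < / INR n <= 1.
Proof.
  intros Hn. split; [apply Rinv_0_lt_compat, lt_0_INR; lia |].
  rewrite <- Rinv_1. apply Rinv_le_contravar; [lra |]. apply (le_INR 1); lia.
Qed.

Lemma inv_INR_le_half n : (2 <= n)%nat -> / INR n <= / 2.
Proof. intros Hn. apply Rinv_le_contravar; [lra |]. apply (le_INR 2); lia. Qed.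

(* [onemax_surv n t c] is [Pr[T > t]] for the (1+1) EA on OneMax started in a
   string with [c] ones (see [surv_OneMax]): an offspring with [e] ones replaces
   the parent iff [e <= c]. *)
Fixpoint onemax_surv (n t c : nat) : R :=
  match t with
  | O => if Nat.eqb c 0 then 0 else 1
  | S t' => (if Nat.eqb c 0 then 0 else 1)
            * dist_expect (/ INR n) n c (fun e => onemax_surv n t' (Nat.min e c))
  end.

Lemma onemax_surv_nonneg n t c : (0 < n)%nat -> 0 <= onemax_surv n t c.
Proof.
  intros Hn. pose proof (inv_INR_prob n Hn).
  revert c; induction t; intros c; simpl; destruct (Nat.eqb c 0); try lra.
  rewrite Rmult_1_l. apply dist_expect_nonneg; auto; lra.
Qed.

Lemma onemax_surv_mono n t c c' : (0 < n)%nat -> (c <= c' <= n)%nat ->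
  onemax_surv n t c <= onemax_surv n t c'.
Proof.
  intros Hn. pose proof (inv_INR_prob n Hn).
  revert c c'; induction t; intros c c' Hc; simpl.
  - destruct (Nat.eqb_spec c 0), (Nat.eqb_spec c' 0); lra || lia.
  - destruct (Nat.eqb_spec c 0) as [-> | Hc0].
    + rewrite Rmult_0_l. destruct (Nat.eqb c' 0); [lra |]. rewrite Rmult_1_l.
      apply dist_expect_nonneg; [lra |]. intros; now apply onemax_surv_nonneg.
    + destruct (Nat.eqb_spec c' 0); [lia |]. rewrite !Rmult_1_l.
      destruct (Nat.eq_dec c c') as [<- | Hne]; [lra |].
      eapply Rle_trans.
      * apply dist_expect_le with (psi' := fun e => onemax_surv n t (Nat.min e c')); [lra |].
        intros e; apply IHt; lia.
      * apply dist_expect_mono; [lra | apply inv_INR_le_half; lia | | lia].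
        intros e. apply IHt; lia.
Qed.

Definition accept (g : list bool -> R) (x y : list bool) : list bool :=
  if Rle_dec (g y) (g x) then y else x.

Lemma accept_length g n x y : length x = n -> length y = n -> length (accept g x y) = n.
Proof. unfold accept; destruct (Rle_dec _ _); auto. Qed.

Lemma sumL_ea_kernel g n x h : length x = n ->
  sumL (all_bits n) (fun z => ea_kernel g n x z * h z)
  = sumL (all_bits n) (fun y => mut n x y * h (accept g x y)).
Proof.
  intros Hx. unfold ea_kernel.
  rewrite (sumL_ext _ _
    (fun z => sumL (all_bits n) (fun y => ind_eq z (accept g x y) * (mut n x y * h z)))).
  2:{ intros z _. rewrite Rmult_comm, <- sumL_scal_l. apply sumL_ext. intros y _.
      unfold accept. destruct (Rle_dec (g y) (g x)); ring. }
  rewrite sumL_comm. apply sumL_ext. intros y Hy.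
  rewrite (sumL_ind_eq n (accept g x y) (fun z => mut n x y * h z)); auto.
  apply accept_length; auto. now apply in_all_bits.
Qed.

Lemma fold_Rmin_le (f : list bool -> R) l i y :
  In y l -> fold_right (fun y m => Rmin (f y) m) i l <= f y.
Proof.
  induction l; simpl; [tauto |]. intros [<- | H]; [apply Rmin_l |].
  eapply Rle_trans; [apply Rmin_r | auto].
Qed.

Lemma fold_Rmin_glb (f : list bool -> R) l i v :
  v <= i -> (forall y, In y l -> v <= f y) -> v <= fold_right (fun y m => Rmin (f y) m) i l.
Proof. induction l; simpl; auto. intros Hi H. apply Rmin_glb; auto. Qed.

Lemma fmin_eq f n xs : length xs = n -> (forall y, length y = n -> f xs <= f y) ->
  fmin f n = f xs.
Proof.
  intros Hl H. unfold fmin. apply Rle_antisym.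
  - apply fold_Rmin_le, in_all_bits; auto.
  - apply fold_Rmin_glb; [apply H, repeat_length |].
    intros y Hy; apply H, in_all_bits; auto.
Qed.

Definition jump_prob (n : nat) : R := (/ INR n) ^ n * (1 - / INR n) ^ (n - 1).

Lemma pow_le_pow_le_1 a i j : 0 <= a <= 1 -> (i <= j)%nat -> a ^ j <= a ^ i.
Proof.
  intros Ha H; induction H; [lra |]. simpl. eapply Rle_trans; [| apply IHle].
  pose proof (pow_le a m (proj1 Ha)). nra.
Qed.

Lemma jump_prob_bounds n : (0 < n)%nat -> 0 < jump_prob n <= 1.
Proof.
  intros Hn. pose proof (inv_INR_prob n Hn) as Hp. unfold jump_prob.
  assert (Hq : 0 < (1 - / INR n) ^ (n - 1)).
  { destruct (Nat.eq_dec n 1) as [-> | Hne]; [simpl; lra |].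
    apply pow_lt. pose proof (inv_INR_le_half n ltac:(lia)). lra. }
  pose proof (pow_lt (/ INR n) n (proj1 Hp)).
  assert (H1 : (/ INR n) ^ n <= 1) by (apply (pow_le_pow_le_1 _ 0); lra || lia).
  assert (H2 : (1 - / INR n) ^ (n - 1) <= 1) by (apply (pow_le_pow_le_1 _ 0); lra || lia).
  split; [now apply Rmult_lt_0_compat | nra].
Qed.

Lemma jump_prob_le_mut n x y : (0 < n)%nat -> length x = n -> length y = n -> x <> y ->
  jump_prob n <= mut n x y.
Proof.
  intros Hn Hx Hy Hne. pose proof (inv_INR_prob n Hn).
  pose proof (hamming_le_length x y).
  assert (hamming x y <> 0%nat) by (intros Hd; apply Hne, hamming_eq_0; congruence).
  unfold jump_prob, mut. apply Rmult_le_compat; try (apply pow_le; lra);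
    apply pow_le_pow_le_1; lra || lia.
Qed.

Lemma sumL_mut n x : (0 < n)%nat -> length x = n -> sumL (all_bits n) (mut n x) = 1.
Proof.
  intros Hn Hx.
  rewrite <- (dist_expect_const_1 (/ INR n) n (hamming x x)), <- sumL_flip_prob_hamming by auto.
  apply sumL_ext. intros y _. unfold mut, flip_prob. ring.
Qed.

Section UniqueMinimum.
Variables (n : nat) (f : list bool -> R) (xs : list bool).
Hypothesis n_pos : (0 < n)%nat.
Hypothesis xs_length : length xs = n.
Hypothesis xs_unique_min : forall y, length y = n -> y <> xs -> f xs < f y.

Lemma not_opt_unique_min x : length x = n ->
  not_opt f n x = if Nat.eqb (hamming x xs) 0 then 0 else 1.
Proof.
  intros Hx. unfold not_opt. rewrite (fmin_eq f n xs xs_length).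
  2:{ intros y Hy. destruct (bits_eq_dec y xs) as [-> | Hne]; [lra |].
      apply Rlt_le, xs_unique_min; auto. }
  destruct (Nat.eqb_spec (hamming x xs) 0) as [E | E].
  - apply hamming_eq_0 in E as ->; [| congruence].
    destruct (Req_EM_T (f xs) (f xs)); [reflexivity | contradiction].
  - destruct (Req_EM_T (f x) (f xs)) as [Efx |]; [exfalso | reflexivity].
    destruct (bits_eq_dec x xs) as [-> | Hne]; [now rewrite hamming_diag in E |].
    specialize (xs_unique_min x Hx Hne). lra.
Qed.

Lemma surv_ge_onemax_surv t x : length x = n ->
  onemax_surv n t (hamming x xs) <= surv f n t x.
Proof.
  pose proof (inv_INR_prob n n_pos) as Hp.
  revert x; induction t; intros x Hx; simpl; rewrite not_opt_unique_min by exact Hx.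
  - lra.
  - destruct (Nat.eqb (hamming x xs) 0); [lra |]. rewrite !Rmult_1_l.
    rewrite sumL_ea_kernel, <- sumL_flip_prob_hamming by auto.
    apply sumL_le. intros y Hy. apply in_all_bits in Hy.
    apply Rmult_le_compat_l; [unfold flip_prob; apply Rmult_le_pos; apply pow_le; lra |].
    eapply Rle_trans; [| apply IHt, accept_length; auto].
    apply onemax_surv_mono; auto. split.
    + unfold accept; destruct (Rle_dec _ _); lia.
    + rewrite <- (accept_length f n x y Hx Hy). apply hamming_le_length.
Qed.

Lemma surv_at_min t : surv f n t xs = 0.
Proof.
  assert (H : not_opt f n xs = 0) by now rewrite not_opt_unique_min, hamming_diag.
  destruct t; simpl; rewrite H; ring.
Qed.

Lemma surv_le_geometric t x : length x = n -> surv f n t x <= (1 - jump_prob n) ^ t.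
Proof.
  pose proof (inv_INR_prob n n_pos) as Hp. pose proof (jump_prob_bounds n n_pos) as Hq.
  set (q := jump_prob n) in *.
  revert x; induction t; intros x Hx; simpl surv; rewrite not_opt_unique_min by exact Hx.
  - simpl. destruct (Nat.eqb _ 0); lra.
  - assert (Hpow : 0 <= (1 - q) ^ t) by (apply pow_le; lra).
    destruct (Nat.eqb_spec (hamming x xs) 0) as [E | E].
    { rewrite Rmult_0_l. apply pow_le. lra. }
    assert (Hne : x <> xs) by (intros ->; now rewrite hamming_diag in E).
    rewrite Rmult_1_l, sumL_ea_kernel by exact Hx.
    eapply Rle_trans.
    + apply (sumL_le _ _ (fun y => (1 - q) ^ t * (mut n x y - ind_eq y xs * mut n x y))).
      intros y Hy. apply in_all_bits in Hy.
      assert (Hm : 0 <= mut n x y) by (unfold mut; apply Rmult_le_pos; apply pow_le; lra).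
      unfold ind_eq. destruct (bits_eq_dec y xs) as [-> | Hy'].
      * unfold accept. destruct (Rle_dec (f xs) (f x)) as [_ | C].
        -- rewrite surv_at_min. lra.
        -- exfalso. apply C, Rlt_le, xs_unique_min; auto.
      * rewrite Rmult_0_l, Rminus_0_r, (Rmult_comm ((1 - q) ^ t)). apply Rmult_le_compat_l; auto.
        apply IHt, accept_length; auto.
    + rewrite sumL_scal_l, sumL_minus, sumL_mut, sumL_ind_eq by auto.
      simpl. rewrite (Rmult_comm (1 - q)). apply Rmult_le_compat_l; auto.
      pose proof (jump_prob_le_mut n x xs n_pos Hx xs_length Hne). subst q. lra.
Qed.

Lemma tail_prob_le_geometric t : tail_prob f n t <= (1 - jump_prob n) ^ t.
Proof.
  assert (H2n : 0 < 2 ^ n) by (apply pow_lt; lra).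
  unfold tail_prob. eapply Rle_trans.
  - apply (sumL_le _ _ (fun _ => / 2 ^ n * (1 - jump_prob n) ^ t)).
    intros x Hx. apply in_all_bits in Hx.
    apply Rmult_le_compat_l; [apply Rlt_le, Rinv_0_lt_compat; auto |].
    now apply surv_le_geometric.
  - rewrite sumL_all_bits_const. right. field. lra.
Qed.

End UniqueMinimum.

Lemma OneMax_hamming z : OneMax z = INR (hamming z (repeat false (length z))).
Proof. unfold OneMax. now rewrite count_true_hamming. Qed.

Lemma OneMax_unique_min n y : length y = n -> y <> repeat false n ->
  OneMax (repeat false n) < OneMax y.
Proof.
  intros Hy Hne. rewrite !OneMax_hamming, repeat_length, hamming_diag, Hy.
  apply lt_0_INR. destruct (hamming y (repeat false n)) eqn:E; [| lia].
  exfalso. apply Hne, hamming_eq_0; auto. now rewrite repeat_length.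
Qed.

Lemma surv_OneMax n t z : length z = n ->
  surv OneMax n t z = onemax_surv n t (hamming z (repeat false n)).
Proof.
  assert (Hzeros : length (repeat false n) = n) by apply repeat_length.
  pose proof (not_opt_unique_min n OneMax _ Hzeros (OneMax_unique_min n)) as Hopt.
  revert z; induction t; intros z Hz; simpl; rewrite Hopt by exact Hz; [reflexivity |].
  f_equal. rewrite sumL_ea_kernel, <- sumL_flip_prob_hamming by auto.
  apply sumL_ext. intros y Hy. apply in_all_bits in Hy. unfold mut, flip_prob. f_equal.
  rewrite IHt by (apply accept_length; auto). f_equal.
  unfold accept. rewrite !OneMax_hamming, Hz, Hy.
  destruct (Rle_dec _ _) as [Hle | Hgt].
  - apply INR_le in Hle. lia.
  - assert (~ (hamming y (repeat false n) <= hamming z (repeat false n))%nat)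
      by (intros Hle; apply Hgt, le_INR, Hle). lia.
Qed.

Lemma tail_prob_OneMax_le n f xs t : (0 < n)%nat -> length xs = n ->
  (forall y, length y = n -> y <> xs -> f xs < f y) ->
  0 <= tail_prob OneMax n t <= tail_prob f n t.
Proof.
  intros Hn Hxs Hmin. unfold tail_prob.
  assert (H2n : 0 < / 2 ^ n) by (apply Rinv_0_lt_compat, pow_lt; lra).
  rewrite (sumL_ext _ _ (fun x => (fun k => / 2 ^ n * onemax_surv n t k)
                                    (hamming x (repeat false n)))).
  2:{ intros x Hx. apply in_all_bits in Hx. now rewrite surv_OneMax. }
  split.
  - apply sumL_nonneg. intros x _.
    apply Rmult_le_pos; [lra | now apply onemax_surv_nonneg].
  - rewrite <- (sumL_hamming_to_zeros n xs (fun k => / 2 ^ n * onemax_surv n t k)) by exact Hxs.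
    apply sumL_le. intros x Hx. apply in_all_bits in Hx.
    apply Rmult_le_compat_l; [lra |]. now apply surv_ge_onemax_surv.
Qed.

Lemma infinite_sum_le_geometric (a b : nat -> R) (r : R) :
  0 <= r < 1 -> (forall t, 0 <= a t <= b t) -> (forall t, b t <= r ^ t) ->
  exists ea eb, infinite_sum a ea /\ infinite_sum b eb /\ ea <= eb.
Proof.
  intros Hr Hab Hb.
  assert (Hgeo : forall t, 0 <= b t <= 1 * r ^ t).
  { intros t. rewrite Rmult_1_l. pose proof (Hab t). pose proof (Hb t). lra. }
  assert (Hr1 : Rabs r < 1) by (rewrite Rabs_right; lra).
  destruct (Rseries_CV_comp b _ Hgeo (exist _ _ (GP_infinite r Hr1))) as [eb Heb].
  destruct (Rseries_CV_comp a b Hab (exist _ eb Heb)) as [ea Hea].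
  exists ea, eb. split; [exact Hea | split; [exact Heb |]].
  eapply Rle_cv_lim; [| exact Hea | exact Heb].
  intros N. apply sum_Rle. intros k _. apply Hab.
Qed.

Theorem theorem8 (n : nat) (f : list bool -> R) :
  (0 < n)%nat -> unique_global_min f n ->
  exists ef eOM : R,
    expected_time f n ef /\ expected_time OneMax n eOM /\ eOM <= ef.
Proof.
  intros Hn [xs [Hxs Hmin]].
  pose proof (jump_prob_bounds n Hn).
  destruct (infinite_sum_le_geometric (tail_prob OneMax n) (tail_prob f n)
              (1 - jump_prob n)) as [eOM [ef [HOM [Hf Hle]]]].
  - lra.
  - intros t. now apply (tail_prob_OneMax_le n f xs).
  - intros t. now apply (tail_prob_le_geometric n f xs).
  - now exists ef, eOM.
Qed.
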